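(* Let $X$ be a random variable whose support is contained in the bounded interval $(l,r)$, with $l,r$ finite. Then: (i) for all $\gamma\ge1$ such that $(\gamma,0)\in D_X$ and $(0,\gamma)\in D_X$, $$\left[(r-l)^{1/\gamma}-[H_X(\gamma)]^{1/\gamma}\right]^\gamma\le K_X(\gamma)\le\left[(r-l)^{1/\gamma}+[H_X(\gamma)]^{1/\gamma}\right]^\gamma,$$ $$\left[(r-l)^{1/\gamma}-[K_X(\gamma)]^{1/\gamma}\right]^\gamma\le H_X(\gamma)\le\left[(r-l)^{1/\gamma}+[K_X(\gamma)]^{1/\gamma}\right]^\gamma;$$ (ii) for all $\gamma\ge1$ such that $(0,\gamma)\in D_X$, $$G_X(\gamma,\gamma)\le\left[[K_X(\gamma)]^{1/\gamma}+[K_X(2\gamma)]^{1/\gamma}\right]^\gamma;$$ (iii) for all $\gamma\ge1$ such that $(\gamma,0)\in D_X$, $$G_X(\gamma,\gamma)\le\left[[H_X(\gamma)]^{1/\gamma}+[H_X(2\gamma)]^{1/\gamma}\right]^\gamma.$$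
   Context: For a random variable $X$ with CDF $F$ and survival function $\overline F=1-F$, with $l=\inf\{x:F(x)>0\}$, $r=\sup\{x:\overline F(x)>0\}$, the CIGF is $G_X(\alpha,\beta)=\int_l^r [F(x)]^\alpha[\overline F(x)]^\beta\,dx$ on $D_X=\{(\alpha,\beta)\in\mathbb{R}^2: G_X(\alpha,\beta)<\infty\}$; $H_X(\alpha)=G_X(\alpha,0)=\int_l^r[F(x)]^\alpha dx$ and $K_X(\beta)=G_X(0,\beta)=\int_l^r[\overline F(x)]^\beta dx$. *)

From HB Require Import structures.
From mathcomp Require Import all_boot all_order all_algebra.
From mathcomp Require Import all_classical all_reals all_analysis.
Set Implicit Arguments. Unset Strict Implicit. Unset Printing Implicit Defensive.
Import Order.TTheory GRing.Theory Num.Theory.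
Local Open Scope classical_set_scope.
Local Open Scope ring_scope.

Section cigf.
Context {d : measure_display} {T : measurableType d} {R : realType}
  {P : probability T R}.

Definition Fr (X : {RV P >-> R}) (x : R) : R := fine (cdf X x).
Definition Fbarr (X : {RV P >-> R}) (x : R) : R := fine (ccdf X x).

Definition lX (X : {RV P >-> R}) : R := inf [set x | 0 < Fr X x].
Definition rX (X : {RV P >-> R}) : R := sup [set x | 0 < Fbarr X x].

Definition CIGF (X : {RV P >-> R}) (a b : R) : \bar R :=
  (\int[lebesgue_measure]_(x in `]lX X, rX X[)
     ((Fr X x `^ a) * (Fbarr X x `^ b))%:E)%E.

Definition inD (X : {RV P >-> R}) (a b : R) : Prop := (CIGF X a b < +oo)%E.

Definition HX (X : {RV P >-> R}) (a : R) : \bar R := CIGF X a 0.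
Definition KX (X : {RV P >-> R}) (b : R) : \bar R := CIGF X 0 b.
End cigf.

From HB Require Import structures.
From mathcomp Require Import all_boot all_order all_algebra.
From mathcomp Require Import all_classical all_reals all_analysis.
From mathcomp Require Import measurable_realfun.
Set Implicit Arguments. Unset Strict Implicit. Unset Printing Implicit Defensive.
Import Order.TTheory GRing.Theory Num.Theory.
Local Open Scope classical_set_scope.
Local Open Scope ring_scope.

(* Since F + Fbar = 1 on (l, r), Minkowski's inequality in L^g((l, r)) gives
   (r - l)^(1/g) = |F + Fbar|_g <= |F|_g + |Fbar|_g = H(g)^(1/g) + K(g)^(1/g),
   which rearranges into the lower bounds of (i).  The other bounds are crude:
   0 <= F, Fbar <= 1 gives G(g, g) <= H(g), K(g) <= r - l, and
   x <= (x^(1/g) + y^(1/g))^g for all x, y >= 0. *)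

Lemma powR_le1 (R : realType) (x p : R) : 0 <= p -> 0 <= x <= 1 -> x `^ p <= 1.
Proof.
move=> p0 /andP[x0 x1]; have := @ge0_ler_powR R p p0 x 1.
by rewrite powR1; apply; rewrite ?nnegrE.
Qed.

Section powR_inv.
Variables (R : realType) (p : R).
Hypothesis p_gt0 : 0 < p.

Lemma powRVK x : 0 <= x -> (x `^ p^-1) `^ p = x.
Proof. by move=> x0; rewrite -powRrM mulVf ?gt_eqF// powRr1. Qed.

Lemma le_powRV_addr x y : 0 <= x -> x <= (x `^ p^-1 + y `^ p^-1) `^ p.
Proof.
move=> x0; rewrite -{1}(powRVK x0); apply: ge0_ler_powR; rewrite ?nnegrE.
- exact: ltW.
- exact: powR_ge0.
- by rewrite addr_ge0 ?powR_ge0.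
- by rewrite lerDl powR_ge0.
Qed.

Lemma powRV_subr_le x y z : 0 <= y <= x -> 0 <= z ->
  x `^ p^-1 <= y `^ p^-1 + z `^ p^-1 -> (x `^ p^-1 - y `^ p^-1) `^ p <= z.
Proof.
move=> /andP[y0 yx] z0 xyz; rewrite -(powRVK z0); apply: ge0_ler_powR; rewrite ?nnegrE.
- exact: ltW.
- rewrite subr_ge0; apply: ge0_ler_powR; rewrite ?nnegrE//.
  + by rewrite invr_ge0 ltW.
  + exact: le_trans yx.
- exact: powR_ge0.
- by rewrite lerBlDl.
Qed.

Lemma le_poweRV_addr x y : 0 <= x ->
  (x%:E <= (x%:E `^ p^-1 + y%:E `^ p^-1) `^ p)%E.
Proof. by move=> x0; rewrite !poweR_EFin lee_fin le_powRV_addr. Qed.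

Lemma poweRV_bounds_of_le_add L h k : 0 <= h <= L -> 0 <= k <= L ->
  (L%:E `^ p^-1 <= h%:E `^ p^-1 + k%:E `^ p^-1 ->
   (L%:E `^ p^-1 - h%:E `^ p^-1) `^ p <= k%:E <= (L%:E `^ p^-1 + h%:E `^ p^-1) `^ p)%E.
Proof.
move=> hL /andP[k0 kL]; rewrite !poweR_EFin !lee_fin => Lhk.
rewrite powRV_subr_le//=.
exact: le_trans kL (le_powRV_addr h (le_trans k0 kL)).
Qed.

End powR_inv.

Lemma lebesgue_measure_itv_oo (R : realType) (a b : R) : a <= b ->
  lebesgue_measure [set` `]a, b[] = (b - a)%:E.
Proof.
rewrite lebesgue_measure_itv /= lte_fin le_eqVlt => /predU1P[->|ab].
  by rewrite ltxx subrr.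
by rewrite ab EFinB.
Qed.

Lemma integral01_le_measure d (T : measurableType d) (R : realType)
    (mu : {measure set T -> \bar R}) (D : set T) (f : T -> R) (m : R) :
  measurable D -> mu D = m%:E -> measurable_fun D f ->
  (forall x, D x -> 0 <= f x <= 1) ->
  exists2 c, (\int[mu]_(x in D) (f x)%:E = c%:E)%E & 0 <= c <= m.
Proof.
move=> mD muD mf f01.
have f0 x : D x -> (0 <= (f x)%:E)%E by move=> /f01/andP[].
have i0 : (0 <= \int[mu]_(x in D) (f x)%:E)%E by exact: integral_ge0.
have i1 : (\int[mu]_(x in D) (f x)%:E <= m%:E)%E.
  rewrite -[m%:E]mul1e -muD -integral_cst//; apply: ge0_le_integral => //.
  - by apply/measurable_EFinP.
  - by move=> x /f01/andP[_]; rewrite lee_fin.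
have i_fin : (\int[mu]_(x in D) (f x)%:E)%E \is a fin_num.
  by rewrite ge0_fin_numE// (le_lt_trans i1) ?ltry.
exists (fine (\int[mu]_(x in D) (f x)%:E)%E); first by rewrite fineK.
by rewrite -!lee_fin fineK// i0 i1.
Qed.

Section minkowski_partition_of_unity.
Context d (T : measurableType d) (R : realType) (mu : {measure set T -> \bar R}).
Variables (D : set T) (p : R).
Hypothesis mD : measurable D.

Lemma Lnorm_indic_mul (f : T -> R) : 0 < p -> {in D, forall x, 0 <= f x} ->
  ('N[mu]_p%:E[EFin \o (\1_D \* f)%R] =
   (\int[mu]_(x in D) (f x `^ p)%:E) `^ p^-1)%E.
Proof.
move=> p0 f0; rewrite unlock /= (integral_mkcond D).
apply: (congr1 (poweR^~ p^-1)); apply: eq_integral => x _.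
rewrite patchE indicE; case: ifP => xD /=.
  by rewrite mul1r ger0_norm ?f0.
by rewrite mul0r normr0 powR0 ?gt_eqF.
Qed.

Lemma minkowski_partition_of_unity (f g : T -> R) : 1 <= p ->
  measurable_fun setT f -> measurable_fun setT g ->
  {in D, forall x, 0 <= f x} -> {in D, forall x, 0 <= g x} ->
  {in D, forall x, f x + g x = 1} ->
  (mu D `^ p^-1 <= (\int[mu]_(x in D) (f x `^ p)%:E) `^ p^-1
                   + (\int[mu]_(x in D) (g x `^ p)%:E) `^ p^-1)%E.
Proof.
move=> p1 mf mg f0 g0 fg1.
have p0 : 0 < p by exact: lt_le_trans ltr01 p1.
have mi : measurable_fun setT (\1_D : T -> R) by exact: measurable_indic.
have := minkowski_EFin mu (measurable_funM mi mf) (measurable_funM mi mg) p1.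
rewrite !Lnorm_indic_mul//; apply: le_trans.
have -> : ((\1_D \* f) \+ (\1_D \* g) = \1_D \* cst 1)%R.
  apply/funext => x /=; rewrite -mulrDr indicE.
  by have [/fg1 ->|_] := boolP (x \in D); rewrite ?mul0r.
rewrite (@Lnorm_indic_mul (cst 1))//.
under eq_integral do rewrite /cst powR1.
by rewrite integral_cst// mul1e.
Qed.

End minkowski_partition_of_unity.

Section cigf_bounds.
Context d (T : measurableType d) (R : realType) (P : probability T R)
  (X : {RV P >-> R}).

Lemma Fr_add_Fbarr x : Fr X x + Fbarr X x = 1.
Proof. by rewrite /Fr /Fbarr -fineD ?fin_num_measure// cdf_ccdf_1. Qed.

Lemma Fr_ge0 x : 0 <= Fr X x.
Proof. by rewrite fine_ge0 ?cdf_ge0. Qed.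

Lemma Fbarr_ge0 x : 0 <= Fbarr X x.
Proof. by rewrite fine_ge0. Qed.

Lemma Fr_le1 x : Fr X x <= 1.
Proof. by rewrite -(Fr_add_Fbarr x) lerDl Fbarr_ge0. Qed.

Lemma Fbarr_le1 x : Fbarr X x <= 1.
Proof. by rewrite -(Fr_add_Fbarr x) lerDr Fr_ge0. Qed.

Lemma measurable_Fr : measurable_fun setT (Fr X).
Proof. exact: measurableT_comp (cdf_measurable X). Qed.

Lemma measurable_Fbarr : measurable_fun setT (Fbarr X).
Proof. exact: measurableT_comp (ccdf_measurable X). Qed.

Lemma lX_le_rX : has_lbound [set x | 0 < Fr X x] ->
  has_ubound [set x | 0 < Fbarr X x] -> lX X <= rX X.
Proof.
move=> hl hu; rewrite leNgt; apply/negP => /midf_lt[rm ml].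
set m := (rX X + lX X) / 2 in rm ml.
have [F0|Fm] := eqVneq (Fr X m) 0.
- have : m <= rX X.
    apply: (ub_le_sup hu); rewrite /= (_ : Fbarr X m = 1) ?ltr01//.
    by rewrite -(Fr_add_Fbarr m) F0 add0r.
  by rewrite leNgt rm.
- have : lX X <= m by apply: (ge_inf hl); rewrite /= lt_neqAle eq_sym Fm Fr_ge0.
  by rewrite leNgt ml.
Qed.

Local Notation I := [set` `]lX X, rX X[].

Lemma HXE g : HX X g = (\int[lebesgue_measure]_(x in I) (Fr X x `^ g)%:E)%E.
Proof. by apply: eq_integral => x _; rewrite powRr0 mulr1. Qed.

Lemma KXE g : KX X g = (\int[lebesgue_measure]_(x in I) (Fbarr X x `^ g)%:E)%E.
Proof. by apply: eq_integral => x _; rewrite powRr0 mul1r. Qed.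

Lemma measurable_Fr_powR g : measurable_fun setT (fun x => Fr X x `^ g).
Proof. exact: measurableT_comp (measurable_powR g) measurable_Fr. Qed.

Lemma measurable_Fbarr_powR g : measurable_fun setT (fun x => Fbarr X x `^ g).
Proof. exact: measurableT_comp (measurable_powR g) measurable_Fbarr. Qed.

Lemma CIGF_le_HX g : 0 <= g -> (CIGF X g g <= HX X g)%E.
Proof.
move=> g0; rewrite HXE; apply: ge0_le_integral => //.
- by move=> x _; rewrite lee_fin mulr_ge0 ?powR_ge0.
- apply/measurable_EFinP/measurable_funTS.
  exact: measurable_funM (measurable_Fr_powR g) (measurable_Fbarr_powR g).
- by apply/measurable_EFinP; exact: measurable_funTS (measurable_Fr_powR g).
- move=> x _; rewrite lee_fin ler_piMr ?powR_ge0// powR_le1//.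
  by rewrite Fbarr_ge0 Fbarr_le1.
Qed.

Lemma CIGF_le_KX g : 0 <= g -> (CIGF X g g <= KX X g)%E.
Proof.
move=> g0; rewrite KXE; apply: ge0_le_integral => //.
- by move=> x _; rewrite lee_fin mulr_ge0 ?powR_ge0.
- apply/measurable_EFinP/measurable_funTS.
  exact: measurable_funM (measurable_Fr_powR g) (measurable_Fbarr_powR g).
- by apply/measurable_EFinP; exact: measurable_funTS (measurable_Fbarr_powR g).
- move=> x _; rewrite lee_fin ler_piMl ?powR_ge0// powR_le1//.
  by rewrite Fr_ge0 Fr_le1.
Qed.

Hypothesis l_le_r : lX X <= rX X.

Lemma HX_bounded g : 0 <= g -> exists2 h, HX X g = h%:E & 0 <= h <= rX X - lX X.
Proof.
move=> g0; rewrite HXE; apply: integral01_le_measure => //.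
- exact: lebesgue_measure_itv_oo.
- exact: measurable_funTS (measurable_Fr_powR g).
- by move=> x _; rewrite powR_ge0 powR_le1// Fr_ge0 Fr_le1.
Qed.

Lemma KX_bounded g : 0 <= g -> exists2 k, KX X g = k%:E & 0 <= k <= rX X - lX X.
Proof.
move=> g0; rewrite KXE; apply: integral01_le_measure => //.
- exact: lebesgue_measure_itv_oo.
- exact: measurable_funTS (measurable_Fbarr_powR g).
- by move=> x _; rewrite powR_ge0 powR_le1// Fbarr_ge0 Fbarr_le1.
Qed.

Lemma minkowski_HX_KX g : 1 <= g ->
  ((rX X - lX X)%:E `^ g^-1 <= HX X g `^ g^-1 + KX X g `^ g^-1)%E.
Proof.
move=> g1; rewrite HXE KXE -lebesgue_measure_itv_oo//.
apply: minkowski_partition_of_unity => //.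
- exact: measurable_Fr.
- exact: measurable_Fbarr.
- by move=> x _; exact: Fr_ge0.
- by move=> x _; exact: Fbarr_ge0.
- by move=> x _; exact: Fr_add_Fbarr.
Qed.

End cigf_bounds.

Theorem proposition6 (d : measure_display) (T : measurableType d)
  (R : realType) (P : probability T R) (X : {RV P >-> R}) :
  (* l and r are finite *)
  has_lbound [set x | 0 < Fr X x] ->
  has_ubound [set x | 0 < Fbarr X x] ->
  (* (i) *)
  (forall g : R, 1 <= g -> inD X g 0 -> inD X 0 g ->
     (((rX X - lX X)%:E `^ g^-1 - HX X g `^ g^-1) `^ g <= KX X g
      /\ KX X g <= ((rX X - lX X)%:E `^ g^-1 + HX X g `^ g^-1) `^ g
      /\ ((rX X - lX X)%:E `^ g^-1 - KX X g `^ g^-1) `^ g <= HX X g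
      /\ HX X g <= ((rX X - lX X)%:E `^ g^-1 + KX X g `^ g^-1) `^ g)%E) /\
  (* (ii) *)
  (forall g : R, 1 <= g -> inD X 0 g ->
     (CIGF X g g <= (KX X g `^ g^-1 + KX X (2 * g) `^ g^-1) `^ g)%E) /\
  (* (iii) *)
  (forall g : R, 1 <= g -> inD X g 0 ->
     (CIGF X g g <= (HX X g `^ g^-1 + HX X (2 * g) `^ g^-1) `^ g)%E).
Proof.
move=> hl hu; have lr := lX_le_rX hl hu.
split; [|split] => g g1 _; have g0 : 0 < g := lt_le_trans ltr01 g1.
- move=> _; have := minkowski_HX_KX lr g1.
  have [h -> hb] := HX_bounded lr (ltW g0).
  have [k -> kb] := KX_bounded lr (ltW g0).
  move=> Lhk; have /andP[lbK ubK] := poweRV_bounds_of_le_add g0 hb kb Lhk.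
  rewrite addeC in Lhk; have /andP[lbH ubH] := poweRV_bounds_of_le_add g0 kb hb Lhk.
  by do ?split.
- apply: le_trans (CIGF_le_KX X (ltW g0)) _.
  have [k -> /andP[k0 _]] := KX_bounded lr (ltW g0).
  have [k' -> _] := KX_bounded lr (mulr_ge0 (ler0n _ 2) (ltW g0)).
  exact: le_poweRV_addr.
- apply: le_trans (CIGF_le_HX X (ltW g0)) _.
  have [h -> /andP[h0 _]] := HX_bounded lr (ltW g0).
  have [h' -> _] := HX_bounded lr (mulr_ge0 (ler0n _ 2) (ltW g0)).
  exact: le_poweRV_addr.
Qed.
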